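(* Let $G$ be a group and $N$ a finitely generated normal subgroup of $G$, and assume that $N$ is residually simple. Then $N\cap \Phi_f(G)=1$. In particular, if $\Phi_f(G/N)=1$, then $\Phi_f(G)=1$.
   Context: A group $N$ is residually simple if for every nontrivial $x\in N$ there exist a finite non-abelian simple group $S$ and an epimorphism $f:N\to S$ with $f(x)\neq 1$. For a group $G$, a maximal subgroup is a proper subgroup maximal with respect to inclusion among proper subgroups, and $\Phi_f(G)$ is the intersection of all maximal subgroups of finite index in $G$ (taken to be $G$ if there are none). *)

From HB Require Import structures.
From mathcomp Require Import all_boot all_fingroup all_solvable.
Set Implicit Arguments. Unset Strict Implicit. Unset Printing Implicit Defensive.
Local Open Scope group_scope.

Section AbstractGroups.
Variable G : groupType.

Definition is_subgroup (H : G -> Prop) : Prop :=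
  H 1 /\ (forall x y, H x -> H y -> H (x * y)) /\ (forall x, H x -> H x^-1).

Definition is_normal (N : G -> Prop) : Prop :=
  is_subgroup N /\ forall g n, N n -> N (g^-1 * n * g).

Definition finitely_generated (N : G -> Prop) : Prop :=
  exists l : seq G,
    (forall x, x \in l -> N x) /\
    (forall H : G -> Prop, is_subgroup H -> (forall x, x \in l -> H x) ->
       forall y, N y -> H y).

Definition finite_index (H : G -> Prop) : Prop :=
  exists l : seq G, forall g, exists2 x, x \in l & H (x^-1 * g).

Definition maximal_subgroup (M : G -> Prop) : Prop :=
  is_subgroup M /\ (exists g, ~ M g) /\
  forall K : G -> Prop, is_subgroup K -> (forall x, M x -> K x) ->
    (forall x, K x -> M x) \/ (forall x, K x).

(* Phi_f(G): intersection of all maximal subgroups of finite index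
   (the whole of G when there are none) *)
Definition Phi_f : G -> Prop :=
  fun g => forall M : G -> Prop, maximal_subgroup M -> finite_index M -> M g.

Definition epi_on (N : G -> Prop) (gT : finGroupType) (S : {group gT})
  (f : G -> gT) : Prop :=
  (forall x y, N x -> N y -> f (x * y) = f x * f y) /\
  (forall x, N x -> f x \in S) /\
  (forall s, s \in S -> exists2 x, N x & f x = s).

Definition residually_simple (N : G -> Prop) : Prop :=
  forall x, N x -> x <> 1 ->
    exists (gT : finGroupType) (S : {group gT}) (f : G -> gT),
      [/\ simple S, ~~ abelian S, epi_on N S f & f x != 1].

End AbstractGroups.

Definition group_hom (G Q : groupType) (p : G -> Q) : Prop :=
  forall x y, p (x * y) = p x * p y.

(* Fix a finite non-abelian simple group S and a finite generating list l of N.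
   An epimorphism N ->> S is determined by the images of l, so G acts, by
   precomposition with conjugation, on a finite set of tuples encoding these
   epimorphisms.  The resulting permutation representation phi of G has finite
   image, and an element of N lies in its kernel iff it is killed by every
   epimorphism N ->> S.  Elements of Phi_f(G) are mapped into the Frattini
   subgroup of phi(G), so phi(N) :&: 'Phi(phi(G)) is a normal subgroup of phi(G)
   inside its Frattini subgroup; if it were nontrivial, the Frattini argument
   would give a nontrivial abelian normal subgroup of phi(G) inside phi(N), and
   its image under an epimorphism not killing it would be a nontrivial abelian
   normal subgroup of S.  Hence N :&: Phi_f(G) is killed by every epimorphism
   N ->> S, so it is trivial by residual simplicity.  For the second claim,
   Phi_f(G) maps into Phi_f(G/N) = 1, hence lies in N. *)

From HB Require Import structures.
From mathcomp Require Import all_boot all_fingroup all_solvable.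
From mathcomp Require Import boolp.
Set Implicit Arguments. Unset Strict Implicit. Unset Printing Implicit Defensive.
Local Open Scope group_scope.

Section Subgroup.
Variables (G : groupType) (H : G -> Prop).
Hypothesis sH : is_subgroup H.

Lemma subgroup1 : H 1.
Proof. by case: sH. Qed.

Lemma subgroupM x y : H x -> H y -> H (x * y).
Proof. by case: sH => _ [mH _]; apply: mH. Qed.

Lemma subgroupV x : H x -> H x^-1.
Proof. by case: sH => _ [_ vH]; apply: vH. Qed.

Lemma subgroupJ x y : H x -> H y -> H (x ^ y).
Proof. by move=> Hx Hy; apply: subgroupM (subgroupV Hy) (subgroupM Hx Hy). Qed.

Lemma subgroupR x y : H x -> H y -> H [~ x, y].
Proof. by move=> Hx Hy; apply: subgroupM (subgroupV Hx) (subgroupJ Hx Hy). Qed.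

End Subgroup.

Lemma is_subgroupT (G : groupType) : is_subgroup (fun _ : G => True).
Proof. by []. Qed.

Lemma is_subgroupI (G : groupType) (H K : G -> Prop) :
  is_subgroup H -> is_subgroup K -> is_subgroup (fun x => H x /\ K x).
Proof.
move=> sH sK; split; first by split; exact: subgroup1.
split=> [x y [Hx Kx] [Hy Ky] | x [Hx Kx]].
  by split; [exact: subgroupM Hx Hy | exact: subgroupM Kx Ky].
by split; exact: subgroupV.
Qed.

Lemma normal_subgroup (G : groupType) (N : G -> Prop) : is_normal N -> is_subgroup N.
Proof. by case. Qed.

Lemma normalJ (G : groupType) (N : G -> Prop) n g : is_normal N -> N n -> N (n ^ g).
Proof. by case=> _ nN /(nN g); rewrite conjgE mulgA. Qed.

Definition hom_on (G Q : groupType) (D : G -> Prop) (h : G -> Q) :=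
  forall x y, D x -> D y -> h (x * y) = h x * h y.

Definition hom_im (G Q : groupType) (h : G -> Q) (K : G -> Prop) : Q -> Prop :=
  fun q => exists2 g, K g & h g = q.

Section HomOn.
Variables (G Q : groupType) (D : G -> Prop) (h : G -> Q).
Hypotheses (sD : is_subgroup D) (hD : hom_on D h).

Lemma hom_on1 : h 1 = 1.
Proof.
have D1 := subgroup1 sD.
by apply: (mulgI (h 1)); rewrite -hD // !mulg1.
Qed.

Lemma hom_onV x : D x -> h x^-1 = (h x)^-1.
Proof.
move=> Dx; apply: (mulgI (h x)); rewrite -hD //; last exact: subgroupV.
by rewrite (mulgV x) mulgV hom_on1.
Qed.

Lemma hom_onJ x y : D x -> D y -> h (x ^ y) = h x ^ h y.
Proof.
move=> Dx Dy; have DVy := subgroupV sD Dy; have Dxy := subgroupM sD Dx Dy.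
by rewrite !conjgE hD // hD // hom_onV.
Qed.

Lemma hom_onR x y : D x -> D y -> h [~ x, y] = [~ h x, h y].
Proof.
move=> Dx Dy; have DVx := subgroupV sD Dx; have Dxy := subgroupJ sD Dx Dy.
by rewrite /commg hD // hom_onV // hom_onJ.
Qed.

Lemma is_subgroup_hom_im K :
  is_subgroup K -> (forall g, K g -> D g) -> is_subgroup (hom_im h K).
Proof.
move=> sK sKD; split; first by exists 1; [exact: subgroup1 | exact: hom_on1].
split.
  move=> _ _ [x Kx <-] [y Ky <-]; exists (x * y); first exact: subgroupM.
  by rewrite hD //; apply: sKD.
move=> _ [x Kx <-]; exists x^-1; first exact: subgroupV.
by rewrite hom_onV //; apply: sKD.
Qed.

End HomOn.

Lemma group_hom_on (G Q : groupType) (D : G -> Prop) (p : G -> Q) :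
  group_hom p -> hom_on D p.
Proof. by move=> hp x y _ _. Qed.

Definition pred_set (T : finType) (P : T -> Prop) : {set T} := [set x | `[< P x >]].

Lemma pred_setP (T : finType) (P : T -> Prop) x : reflect (P x) (x \in pred_set P).
Proof. by rewrite inE; apply: asboolP. Qed.

Lemma group_set_pred_set (gT : finGroupType) (K : gT -> Prop) :
  is_subgroup K -> group_set (pred_set K).
Proof.
move=> sK; apply/group_setP; split; first exact/pred_setP/(subgroup1 sK).
by move=> x y /pred_setP Kx /pred_setP Ky; apply/pred_setP/(subgroupM sK).
Qed.

Section Preimage.
Variables (G Q : groupType) (p : G -> Q).
Hypothesis hp : group_hom p.

Lemma group_hom1 : p 1 = 1.
Proof. exact: (hom_on1 (@is_subgroupT G) (group_hom_on hp)). Qed.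

Lemma group_homV x : p x^-1 = (p x)^-1.
Proof. exact: (hom_onV (@is_subgroupT G) (group_hom_on hp)). Qed.

Lemma is_subgroup_preim (M : Q -> Prop) :
  is_subgroup M -> is_subgroup (fun g => M (p g)).
Proof.
move=> sM; split; first by rewrite group_hom1; exact: subgroup1.
split; first by move=> x y Mx My; rewrite hp; exact: subgroupM.
by move=> x Mx; rewrite group_homV; exact: subgroupV.
Qed.

Lemma lift_seq (s : seq Q) :
  (forall q, q \in s -> exists g, p g = q) -> exists s' : seq G, map p s' = s.
Proof.
elim: s => [|q s IHs] ims; first by exists [::].
have [g <-] := ims q (mem_head q s).
have [s' <-] : exists s' : seq G, map p s' = s.
  by apply: IHs => q' q's; apply: ims; rewrite inE q's orbT.
by exists (g :: s').
Qed.

Lemma maximal_subgroup_preim (M : Q -> Prop) :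
  is_subgroup M -> (exists g, ~ M (p g)) ->
  (forall K : Q -> Prop, is_subgroup K -> (forall g, M (p g) -> K (p g)) ->
     (forall g, K (p g) -> M (p g)) \/ (forall g, K (p g))) ->
  maximal_subgroup (fun g => M (p g)).
Proof.
move=> sM notM maxM; split; first exact: is_subgroup_preim.
split=> // K sK sMK.
have sIm := is_subgroup_hom_im (@is_subgroupT G) (group_hom_on hp) sK (fun _ _ => I).
have [ImM | ImT] := maxM _ sIm (fun g Mg => ex_intro2 _ _ g (sMK g Mg) erefl).
  by left=> g Kg; apply: ImM; exists g.
right=> g; have [k Kk ekg] := ImT g.
rewrite -(mulKVg k g); apply: (subgroupM sK Kk); apply: sMK.
by rewrite hp group_homV ekg mulVg; exact: subgroup1.
Qed.

Lemma finite_index_preim (M : Q -> Prop) (s : seq Q) :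
  (forall q, q \in s -> exists g, p g = q) ->
  (forall g, exists2 q, q \in s & M (q^-1 * p g)) ->
  finite_index (fun g => M (p g)).
Proof.
move=> ims cover; have [s' ps's] := lift_seq ims.
exists s' => g; have [q qs Mqg] := cover g.
rewrite -ps's in qs; have [x xs' eqx] := mapP qs.
by exists x => //; rewrite hp group_homV -eqx.
Qed.

Lemma Phi_f_surj_image g :
  (forall q, exists g, p g = q) -> Phi_f g -> Phi_f (p g).
Proof.
move=> psurj Pg M [sM [[q0 Mq0] maxM]] [s cover].
apply: (Pg (fun g => M (p g))); last first.
  by apply: (finite_index_preim (s := s)) => [q _ | g']; [exact: psurj | exact: cover].
apply: maximal_subgroup_preim => //.
  by have [g0 eg0] := psurj q0; exists g0; rewrite eg0.
move=> K sK sMK; have sMK' q : M q -> K q by have [g1 <-] := psurj q; exact: sMK.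
by case: (maxM K sK sMK') => [KM | KT]; [left=> g1; exact: KM | right=> g1; exact: KT].
Qed.

End Preimage.

Lemma is_subgroup_group (gT : finGroupType) (H : {group gT}) :
  is_subgroup (fun x => x \in H).
Proof.
split; first exact: group1.
by split=> [x y|x]; [exact: groupM | rewrite groupV].
Qed.

Section FiniteImage.
Variables (G : groupType) (gT : finGroupType) (p : G -> gT).
Hypothesis hp : group_hom p.

Definition im_group (K : G -> Prop) (sK : is_subgroup K) : {group gT} :=
  Group (group_set_pred_set
    (is_subgroup_hom_im (@is_subgroupT G) (group_hom_on hp) sK (fun _ _ => I))).

Lemma im_groupP K (sK : is_subgroup K) q :
  reflect (exists2 g, K g & p g = q) (q \in im_group sK).
Proof. exact: pred_setP. Qed.

Lemma mem_im_group K (sK : is_subgroup K) g : K g -> p g \in im_group sK.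
Proof. by move=> Kg; apply/im_groupP; exists g. Qed.

Lemma im_group_normal (N : G -> Prop) (nN : is_normal N) :
  im_group (normal_subgroup nN) <| im_group (@is_subgroupT G).
Proof.
apply/andP; split.
  by apply/subsetP => _ /im_groupP[g _ <-]; exact: mem_im_group.
apply/subsetP => _ /im_groupP[g _ <-]; rewrite inE; apply/subsetP => y.
rewrite mem_conjg => /im_groupP[n Nn eny]; apply/im_groupP.
exists (n ^ g); first exact: normalJ.
by rewrite (hom_onJ (@is_subgroupT G) (group_hom_on hp)) // eny conjgKV.
Qed.

Lemma Phi_f_fin_image g : Phi_f g -> p g \in 'Phi(im_group (@is_subgroupT G)).
Proof.
set Im := im_group _ => Pg; have Ip g' : p g' \in Im by exact: mem_im_group.
apply/bigcapP => M /orP[/eqP -> // | /maxgroupP[/properP[sMI [q Iq Mq]] maxM]].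
apply: (Pg (fun g' => p g' \in M)); last first.
  apply: (finite_index_preim hp (M := fun q => q \in M) (s := enum Im)) => [q' | g'].
    by rewrite mem_enum => /im_groupP[g' _ <-]; exists g'.
  by exists (p g'); rewrite ?mem_enum // mulVg group1.
apply: (maximal_subgroup_preim hp (M := fun q => q \in M)).
- exact: is_subgroup_group.
- by have /im_groupP[g' _ epq] := Iq; exists g'; rewrite epq; apply/negP.
move=> K sK sMK; pose KI := (Group (group_set_pred_set sK) :&: Im)%G.
have sMKI : M \subset KI.
  apply/subsetP => q' Mq'; rewrite inE (subsetP sMI) // andbT.
  have /im_groupP[g' _ epq] := subsetP sMI q' Mq'.
  by rewrite -epq in Mq' *; apply/pred_setP/sMK.
have [prKI | ] := boolP (KI \proper Im).
  left=> g' Kg'; rewrite -(maxM KI prKI sMKI) inE Ip andbT.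
  exact/pred_setP.
rewrite properE subsetIr /= => /negbNE sIKI; right=> g'.
by have := subsetP sIKI _ (Ip g'); rewrite inE => /andP[/pred_setP].
Qed.

End FiniteImage.

Lemma simple_abelian_normal_trivial (gT : finGroupType) (S A : {group gT}) :
  simple S -> ~~ abelian S -> A <| S -> abelian A -> A :=: 1.
Proof.
case/simpleP=> _ minS nabS nAS abA.
by case: (minS A nAS) => // AS; rewrite -AS abA in nabS.
Qed.

Lemma simple_center_trivial (gT : finGroupType) (S : {group gT}) :
  simple S -> ~~ abelian S -> 'Z(S) = 1.
Proof.
move=> simS nabS.
exact: simple_abelian_normal_trivial simS nabS (center_normal S) (center_abelian S).
Qed.

Lemma normal_sub_Phi_abelian (gT : finGroupType) (G H : {group gT}) :
  H <| G -> H \subset 'Phi(G) -> H :!=: 1 ->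
  exists2 A : {group gT}, A <| G & [/\ A \subset H, A :!=: 1 & abelian A].
Proof.
move=> nHG sHPhi ntH; have [P sylP] := Sylow_exists (pdiv #|H|) H.
have ntP : P :!=: 1.
  by rewrite -cardG_gt1 (card_Hall sylP) p_part_gt1 pi_pdiv cardG_gt1.
have nPG : P <| G.
  (* Frattini argument: G = H 'N_G(P), and H is a nongenerating part of G. *)
  have genG : 'Phi(G) <*> 'N_G(P) = G.
    apply/eqP; rewrite eqEsubset join_subG Phi_sub subsetIl /=.
    rewrite -{1}(Frattini_arg nHG sylP); apply: mul_subG; last exact: joing_subr.
    exact: subset_trans sHPhi (joing_subl _ _).
  have := Phi_nongen genG; rewrite genGid => NGP.
  rewrite /normal -{2}NGP subsetIr andbT.
  exact: subset_trans (pHall_sub sylP) (normal_sub nHG).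
exists 'Z(P)%G; first exact: char_normal_trans (center_char P) nPG.
split; first exact: subset_trans (center_sub P) (pHall_sub sylP).
  by rewrite center_nil_eq1 // (pgroup_nil (pHall_pgroup sylP)).
exact: center_abelian.
Qed.

Section ConjugationAction.
Variables (G : groupType) (N : G -> Prop) (l : seq G).
Variables (gT : finGroupType) (S : {group gT}).
Hypotheses (nN : is_normal N) (lN : forall x, x \in l -> N x).
Hypothesis genN : forall H : G -> Prop,
  is_subgroup H -> (forall x, x \in l -> H x) -> forall y, N y -> H y.

Let sN := normal_subgroup nN.

Lemma hom_on_eq_gen (Q : groupType) (h1 h2 : G -> Q) :
  hom_on N h1 -> hom_on N h2 -> {in l, h1 =1 h2} -> forall n, N n -> h1 n = h2 n.
Proof.
move=> hN1 hN2 e12 n Nn; suff [] : N n /\ h1 n = h2 n by [].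
apply: (genN (H := fun y => N y /\ h1 y = h2 y)) => //; last first.
  by move=> x xl; split; [exact: lN | exact: e12].
split; first by rewrite (hom_on1 sN hN1) (hom_on1 sN hN2); split=> //; exact: subgroup1.
split=> [x y [Nx ex] [Ny ey] | x [Nx ex]].
  by split; [exact: subgroupM | rewrite hN1 // hN2 // ex ey].
by split; [exact: subgroupV | rewrite (hom_onV sN) // (hom_onV sN) // ex].
Qed.

(* The inverse makes [act] below a right action, like the product of permutations. *)
Definition twist (h : G -> gT) (g : G) : G -> gT := fun y => h (y ^ g^-1).

Lemma twist1 h y : twist h 1 y = h y.
Proof. by rewrite /twist invg1 conjg1. Qed.

Lemma twistM h g g' y : twist (twist h g) g' y = twist h (g * g') y.
Proof. by rewrite /twist -conjgM invMg. Qed.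

Lemma epi_on_twist h g : epi_on N S h -> epi_on N S (twist h g).
Proof.
case=> hN [hS hsurj]; split; [|split].
- by move=> x y Nx Ny; rewrite /twist conjMg hN //; exact: normalJ.
- by move=> x Nx; apply: hS; exact: normalJ.
- move=> s /hsurj [x Nx <-]; exists (x ^ g); first exact: normalJ.
  by rewrite /twist conjgK.
Qed.

Definition gen_image (h : G -> gT) : (size l).-tuple gT := map_tuple h (in_tuple l).

Lemma gen_image_eq h1 h2 :
  (forall n, N n -> h1 n = h2 n) -> gen_image h1 = gen_image h2.
Proof. by move=> e12; apply: val_inj; apply/eq_in_map => y /lN /e12. Qed.

Lemma gen_image_inj h1 h2 : epi_on N S h1 -> epi_on N S h2 ->
  gen_image h1 = gen_image h2 -> forall n, N n -> h1 n = h2 n.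
Proof.
case=> hN1 _ [hN2 _] /(congr1 val) /= /eq_in_map e12.
exact: hom_on_eq_gen.
Qed.

(* Tuples that are not the images of [l] under an epimorphism are fixed. *)
Definition act (t : (size l).-tuple gT) (g : G) : (size l).-tuple gT :=
  odflt t [pick t' | `[< exists2 h, epi_on N S h &
                           gen_image h = t /\ gen_image (twist h g) = t' >]].

Lemma actE h g : epi_on N S h -> act (gen_image h) g = gen_image (twist h g).
Proof.
move=> eh; rewrite /act; case: pickP => [t' /asboolP[h' eh' [e' <-]] | none] /=.
  apply: gen_image_eq => n Nn.
  by rewrite /twist (gen_image_inj eh' eh e') //; exact: normalJ.
by have /asboolPn[] := negbT (none (gen_image (twist h g))); exists h.
Qed.

Lemma act_id t g :
  ~ (exists2 h, epi_on N S h & gen_image h = t) -> act t g = t.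
Proof.
move=> nt; rewrite /act; case: pickP => [t' /asboolP[h eh [eht _]] | _] //=.
by case: nt; exists h.
Qed.

Lemma act1 t : act t 1 = t.
Proof.
have [[h eh <-] | nt] := pselect (exists2 h, epi_on N S h & gen_image h = t).
  by rewrite actE //; apply: gen_image_eq => n _; rewrite twist1.
exact: act_id.
Qed.

Lemma actM t g g' : act (act t g) g' = act t (g * g').
Proof.
have [[h eh <-] | nt] := pselect (exists2 h, epi_on N S h & gen_image h = t).
  rewrite actE // actE ?actE //; last exact: epi_on_twist.
  by apply: gen_image_eq => n _; exact: twistM.
by rewrite !act_id.
Qed.

Lemma actK g : cancel (act^~ g) (act^~ g^-1).
Proof. by move=> t; rewrite actM mulgV act1. Qed.

Definition phi (g : G) : {perm (size l).-tuple gT} := perm (can_inj (actK g)).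

Lemma phiE g t : phi g t = act t g.
Proof. by rewrite permE. Qed.

Lemma phiM : group_hom phi.
Proof. by move=> g g'; apply/permP => t; rewrite permM !phiE actM. Qed.

Let hphi : hom_on (fun _ => True) phi := group_hom_on phiM.

Hypotheses (simS : simple S) (nabS : ~~ abelian S).

Lemma phi_eq1 n : N n -> phi n = 1 <-> forall h, epi_on N S h -> h n = 1.
Proof.
move=> Nn; have NVn := subgroupV sN Nn; split=> [phin1 h eh | ker].
  have [hN [hS hsurj]] := eh.
  have fix_h m : N m -> h m ^ (h n)^-1 = h m.
    move=> Nm; rewrite -(hom_onV sN hN) // -(hom_onJ sN hN) //.
    apply: (gen_image_inj (epi_on_twist n eh) eh) => //.
    by rewrite -actE // -phiE phin1 perm1.
  have : (h n)^-1 \in 'Z(S).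
    apply/centerP; split; first by rewrite groupV hS.
    by move=> _ /hsurj[y Ny <-]; apply/commute_sym/commgP/conjg_fixP/fix_h.
  by rewrite simple_center_trivial // => /set1gP /eqP; rewrite eq_invg1 => /eqP.
apply/permP => t; rewrite phiE perm1.
have [[h eh <-] | nt] := pselect (exists2 h, epi_on N S h & gen_image h = t).
  rewrite actE //; apply: gen_image_eq => m Nm.
  by rewrite /twist (hom_onJ sN eh.1) // (hom_onV sN eh.1) // ker // invg1 conjg1.
exact: act_id.
Qed.

Let phiG := im_group phiM (@is_subgroupT G).
Let phiN := im_group phiM sN.

Lemma im_phi_abelian_normal (A : {group {perm (size l).-tuple gT}}) :
  A <| phiG -> A \subset phiN -> abelian A -> A :=: 1.
Proof.
move=> nAG sAN abA; apply/trivgP/subsetP => z Az.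
have /im_groupP[n Nn ezn] := subsetP sAN z Az; rewrite -ezn in Az *.
apply/set1gP/(phi_eq1 Nn) => h eh; have [hN [hS hsurj]] := eh.
have sK := is_subgroupI sN (is_subgroup_preim phiM (is_subgroup_group A)).
pose B := Group (group_set_pred_set (is_subgroup_hom_im sN hN sK (fun a Ka => Ka.1))).

have sBS : B \subset S by apply/subsetP => _ /pred_setP[a [Na _] <-]; exact: hS.
have nBS : B <| S.
  rewrite /normal sBS; apply/subsetP => _ /hsurj[m Nm <-]; rewrite inE.
  apply/subsetP => y; rewrite mem_conjg => /pred_setP[a [Na Aa] eay].
  apply/pred_setP; exists (a ^ m); last by rewrite (hom_onJ sN hN) // eay conjgKV.
  split; first exact: normalJ.
  rewrite (hom_onJ (@is_subgroupT G) hphi) // memJ_norm //.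
  exact: subsetP (normal_norm nAG) _ (mem_im_group phiM _ I).
have abB : abelian B.
  apply/centsP => _ /pred_setP[a [Na Aa] <-] _ /pred_setP[b [Nb Ab] <-].
  apply/commgP; rewrite -(hom_onR sN hN) //; apply/eqP.
  have [phiR1 _] := phi_eq1 (subgroupR sN Na Nb); apply: phiR1 eh.
  by rewrite (hom_onR (@is_subgroupT G) hphi) //; apply/eqP/commgP/(centsP abA).
have hnB : h n \in B.
  by apply/pred_setP; exists n.
by move: hnB; rewrite (simple_abelian_normal_trivial simS nabS nBS abB) => /set1gP.
Qed.

Lemma Phi_f_ker_epi x : N x -> Phi_f x -> forall h, epi_on N S h -> h x = 1.
Proof.
move=> Nx Px; apply/(phi_eq1 Nx)/eqP; apply: contraT => ntx.
pose T := ('Phi(phiG) :&: phiN)%G.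
have nTG : T <| phiG := normalI (Phi_normal _) (im_group_normal phiM nN).
have ntT : T :!=: 1.
  apply/trivgPn; exists (phi x) => //.
  by rewrite inE (Phi_f_fin_image phiM Px) mem_im_group.
have [A nAG [sAT ntA abA]] := normal_sub_Phi_abelian nTG (subsetIl _ _) ntT.
case/eqP: ntA.
exact: im_phi_abelian_normal nAG (subset_trans sAT (subsetIr _ _)) abA.
Qed.

End ConjugationAction.

Unset Implicit Arguments.

Theorem lemma6p1 (G : groupType) (N : G -> Prop) :
  is_normal N -> finitely_generated N -> residually_simple N ->
  (forall x, N x -> Phi_f x -> x = 1) /\
  (forall (Q : groupType) (p : G -> Q),
     group_hom p -> (forall q : Q, exists g, p g = q) ->
     (forall g, p g = 1 <-> N g) ->
     (forall q : Q, Phi_f q -> q = 1) ->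
     forall g : G, Phi_f g -> g = 1).
Proof.
move=> nN [l [lN genN]] rsN.
have PhiN1 x : N x -> Phi_f x -> x = 1.
  move=> Nx Px; apply: contrapT => ntx.
  have [gT [S [f [simS nabS ef /eqP fx]]]] := rsN x Nx ntx.
  exact/fx/(Phi_f_ker_epi nN lN genN simS nabS Nx Px).
split=> // Q p hp psurj kerp PhiQ1 g Pg.
have Ng : N g by apply/kerp; exact: PhiQ1 _ (Phi_f_surj_image hp psurj Pg).
exact: PhiN1 Ng Pg.
Qed.
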